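(* Assume Condition U1. For every $\sigma=(b,v)\in\mathbb{R}\times(-1,1)$, the symplectic form $\Omega$ is nondegenerate on the tangent space $\mathcal{T}_{S(\sigma)}\mathcal{S}=\mathrm{span}\{\tau_1(v),\tau_2(v)\}$, i.e. $\mathcal{T}_{S(\sigma)}\mathcal{S}$ is a symplectic subspace.
   Context: Fix $a>0$. Condition U1: $U:\mathbb{R}\to\mathbb{R}$ smooth, $U(\pm a)=U'(\pm a)=0$, $U''(\pm a)>0$, $U>0$ on $(-a,a)$, $\inf U>-\infty$, and for some $m>0$, $U(\psi)=\frac{m^2}{2}(\psi\mp a)^2+\mathcal{O}(|\psi\mp a|^{14})$ as $\psi\to\pm a$. $s$ is a kink: $s''=U'(s)$, $s(\pm\infty)=\pm a$. For $|v|<1$: $\gamma=(1-v^2)^{-1/2}$, $\psi_v(y)=s(\gamma y)$, $\pi_v=-v\psi_v'$. For $\sigma=(b,v)$, $S(\sigma)=(\psi_v(x-b),\pi_v(x-b))$ and $\mathcal{S}=\{S(\sigma):b\in\mathbb{R},|v|<1\}$. Tangent vectors (as functions of $y=x-b$): $\tau_1(v)=\partial_bS(\sigma)=(-\psi_v'(y),-\pi_v'(y))$, $\tau_2(v)=\partial_vS(\sigma)=(\partial_v\psi_v(y),\partial_v\pi_v(y))$. Symplectic form on $E=H^1(\mathbb{R})\oplus L^2(\mathbb{R})$: $\Omega(Y_1,Y_2)=\langle Y_1,JY_2\rangle=\langle\psi_1,\pi_2\rangle-\langle\pi_1,\psi_2\rangle$, $J=\begin{pmatrix}0&1\\-1&0\end{pmatrix}$,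 $\langle f,g\rangle=\int fg$. *)

From Stdlib Require Import Reals.
From Coquelicot Require Import Coquelicot.
Open Scope R_scope.

Definition smooth (f : R -> R) : Prop :=
  forall (n : nat) (x : R), ex_derive (Derive_n f n) x.

Definition condition_U1 (a : R) (U : R -> R) : Prop :=
  smooth U /\
  U a = 0 /\ U (- a) = 0 /\
  Derive U a = 0 /\ Derive U (- a) = 0 /\
  Derive_n U 2 a > 0 /\ Derive_n U 2 (- a) > 0 /\
  (forall psi, - a < psi < a -> U psi > 0) /\
  (exists L : R, forall psi, L <= U psi) /\
  (exists m : R, m > 0 /\
     (exists C delta : R, delta > 0 /\
        forall psi, Rabs (psi - a) < delta ->
          Rabs (U psi - m ^ 2 / 2 * (psi - a) ^ 2) <= C * Rabs (psi - a) ^ 14) /\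
     (exists C delta : R, delta > 0 /\
        forall psi, Rabs (psi + a) < delta ->
          Rabs (U psi - m ^ 2 / 2 * (psi + a) ^ 2) <= C * Rabs (psi + a) ^ 14)).

Definition is_kink (a : R) (U s : R -> R) : Prop :=
  (forall x, ex_derive s x) /\
  (forall x, ex_derive (Derive s) x) /\
  (forall x, Derive_n s 2 x = Derive U (s x)) /\
  is_lim s p_infty a /\
  is_lim s m_infty (- a).

Definition gamma (v : R) : R := / sqrt (1 - v ^ 2).

Definition psi_v (s : R -> R) (v : R) (y : R) : R := s (gamma v * y).
Definition pi_v (s : R -> R) (v : R) (y : R) : R := - v * Derive (psi_v s v) y.

(* Elements of E = H^1 + L^2 represented as pairs of real functions of x. *)
Definition Elt := R -> R * R.

Definition L2inner (f g : R -> R) : R :=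
  RInt_gen (fun x => f x * g x) (Rbar_locally m_infty) (Rbar_locally p_infty).

Definition Omega (Y1 Y2 : Elt) : R :=
  L2inner (fun x => fst (Y1 x)) (fun x => snd (Y2 x))
  - L2inner (fun x => snd (Y1 x)) (fun x => fst (Y2 x)).

(* Tangent vectors at S(b,v), as functions of x (with y = x - b). *)
Definition tau1 (s : R -> R) (b v : R) : Elt :=
  fun x => (- Derive (psi_v s v) (x - b), - Derive (pi_v s v) (x - b)).
Definition tau2 (s : R -> R) (b v : R) : Elt :=
  fun x => (Derive (fun w => psi_v s w (x - b)) v,
            Derive (fun w => pi_v s w (x - b)) v).

Definition lincomb (c1 c2 : R) (Y1 Y2 : Elt) : Elt :=
  fun x => (c1 * fst (Y1 x) + c2 * fst (Y2 x), c1 * snd (Y1 x) + c2 * snd (Y2 x)).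

Definition nondegenerate_on_span (Y1 Y2 : Elt) : Prop :=
  forall c1 c2 : R,
    (forall d1 d2 : R, Omega (lincomb c1 c2 Y1 Y2) (lincomb d1 d2 Y1 Y2) = 0) ->
    forall x, lincomb c1 c2 Y1 Y2 x = (0, 0).

From Stdlib Require Import Reals Lra Psatz Classical FunctionalExtensionality.
From Coquelicot Require Import Coquelicot.
Open Scope R_scope.

(* Omega is bilinear and antisymmetric, so on span{tau1, tau2} it is (c1 d2 - c2 d1) times
   Omega(tau1, tau2), and everything reduces to Omega(tau1, tau2) <> 0. With S = s'(gamma (x - b))
   the integrand psi1 pi2 - pi1 psi2 is pointwise gamma^2 (1 + v^2 gamma^2) S^2 (the terms in
   (x - b) s' s'' cancel), so Omega(tau1, tau2) > 0 because a kink is not constant.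

   The analytic content is that all these improper integrals exist. Along a kink the energy
   s'^2 = 2 U(s) holds, and near the wells U(p) is comparable to (p -+ a)^2 with U'(p) = O(p -+ a);
   hence on each tail s either sits at the well or d/dx (s -+ a)^2 <= -c (s -+ a)^2, so that
   (s -+ a)^2, s'^2 and s''^2 decay exponentially. Every component of tau1, tau2 is then
   O(1 / |x - b|), and products of such functions are dominated by a Lorentzian
   M / (1 + (x - b)^2). *)

Local Notation is_RInt_R f l :=
  (is_RInt_gen f (Rbar_locally m_infty) (Rbar_locally p_infty) l).
Local Notation ex_RInt_R f :=
  (ex_RInt_gen f (Rbar_locally m_infty) (Rbar_locally p_infty)).

(** * Improper integrals over the real line *)

Lemma nondecreasing_bounded_lim_p_infty (F : R -> R) (B : R) :
  (forall x y, x <= y -> F x <= F y) -> (forall x, F x <= B) ->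
  exists l, filterlim F (Rbar_locally p_infty) (locally l) /\ forall x, F x <= l.
Proof.
  intros Hmono Hbound.
  destruct (completeness (fun y => exists x, y = F x)) as [l [Hub Hlub]].
  - exists B. intros y [x ->]. apply Hbound.
  - exists (F 0), 0. reflexivity.
  - assert (HFl : forall x, F x <= l) by (intro x; apply Hub; exists x; reflexivity).
    exists l; split; [|exact HFl].
    apply filterlim_locally. intro eps.
    assert (Hx0 : exists x0, l - eps < F x0).
    { apply NNPP. intro Hnone. assert (l <= l - eps); [|destruct eps; simpl in *; lra].
      apply Hlub. intros y [x ->]. apply Rnot_lt_le. intro Hlt. apply Hnone. exists x; exact Hlt. }
    destruct Hx0 as [x0 Hx0]. exists x0. intros x Hx.
    specialize (Hmono x0 x (Rlt_le _ _ Hx)). specialize (HFl x).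
    change (Rabs (F x - l) < eps). apply Rabs_def1; lra.
Qed.

Lemma nondecreasing_bounded_lim_m_infty (F : R -> R) (B : R) :
  (forall x y, x <= y -> F x <= F y) -> (forall x, B <= F x) ->
  exists l, filterlim F (Rbar_locally m_infty) (locally l) /\ forall x, l <= F x.
Proof.
  intros Hmono Hbound.
  destruct (nondecreasing_bounded_lim_p_infty (fun x => - F (- x)) (- B))
    as [l [Hl Hle]].
  - intros x y Hxy. apply Ropp_le_contravar, Hmono. lra.
  - intro x. specialize (Hbound (- x)). lra.
  - exists (- l). split; [|intro x; specialize (Hle (- x)); rewrite Ropp_involutive in Hle; lra].
    apply (filterlim_ext (fun x => - (- F (- - x)))).
    { intro x. rewrite !Ropp_involutive. reflexivity. }
    apply (filterlim_comp _ _ _ (fun x => - F (- - x)) Ropp _ (locally l)).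
    + apply (filterlim_comp _ _ _ Ropp (fun x => - F (- x)) _ (Rbar_locally p_infty)).
      * exact (filterlim_Rbar_opp m_infty).
      * exact Hl.
    + apply (filterlim_opp l).
Qed.

Lemma is_RInt_lorentzian (M b A B : R) :
  is_RInt (fun t => M / (1 + (t - b) ^ 2)) A B (M * atan (B - b) - M * atan (A - b)).
Proof.
  apply (is_RInt_derive (fun t => M * atan (t - b))).
  - intros t _. assert (0 < 1 + (t - b) ^ 2) by (pose proof (pow2_ge_0 (t - b)); lra).
    auto_derive; [exact I|]. field. lra.
  - intros x _. assert (0 < 1 + (x - b) ^ 2) by (pose proof (pow2_ge_0 (x - b)); lra).
    apply (ex_derive_continuous (V := R_NormedModule)). auto_derive. lra.
Qed.

Lemma RInt_le_lorentzian (h : R -> R) (M b A B : R) : A <= B ->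
  (forall x, continuous h x) -> (forall x, 0 <= h x <= M / (1 + (x - b) ^ 2)) ->
  0 <= RInt h A B <= M * PI.
Proof.
  intros HAB Hcont Hbound.
  assert (HM : 0 <= M).
  { destruct (Hbound b) as [H0 H1]. replace (1 + (b - b) ^ 2) with 1 in H1 by ring. lra. }
  assert (Hex : ex_RInt h A B) by (apply (ex_RInt_continuous (V := R_CompleteNormedModule)); auto).
  split.
  - apply RInt_ge_0; auto. intros; apply Hbound.
  - apply Rle_trans with (RInt (fun t => M / (1 + (t - b) ^ 2)) A B).
    + apply RInt_le; auto. eexists; apply is_RInt_lorentzian. intros; apply Hbound.
    + rewrite (is_RInt_unique _ _ _ _ (is_RInt_lorentzian M b A B)).
      pose proof (atan_bound (B - b)). pose proof (atan_bound (A - b)). nra.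
Qed.

Lemma is_RInt_R_nonneg (h : R -> R) (M b : R) :
  (forall x, continuous h x) -> (forall x, 0 <= h x <= M / (1 + (x - b) ^ 2)) ->
  exists l, is_RInt_R h l /\ forall A B, A <= B -> RInt h A B <= l.
Proof.
  intros Hcont Hbound.
  assert (Hex : forall u v, ex_RInt h u v)
    by (intros; apply (ex_RInt_continuous (V := R_CompleteNormedModule)); auto).
  set (F := fun x => RInt h 0 x).
  assert (HF : forall A B, RInt h A B = F B - F A).
  { intros A B. unfold F. rewrite <- (RInt_Chasles h 0 A B) by auto.
    unfold plus; simpl. lra. }
  assert (Hincr : forall A B, A <= B -> 0 <= F B - F A <= M * PI).
  { intros A B HAB. rewrite <- HF. exact (RInt_le_lorentzian h M b A B HAB Hcont Hbound). }
  assert (Hmono : forall x y, x <= y -> F x <= F y)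
    by (intros x y Hxy; specialize (Hincr x y Hxy); lra).
  assert (Hbd : forall x, F 0 - M * PI <= F x <= F 0 + M * PI).
  { intro x. pose proof (Hincr 0 0 (Rle_refl 0)).
    destruct (Rle_dec 0 x) as [Hx|Hx];
      [specialize (Hincr 0 x Hx) | specialize (Hincr x 0 ltac:(lra))]; lra. }
  destruct (nondecreasing_bounded_lim_p_infty F (F 0 + M * PI)) as [lp [Hlp Hlep]];
    [exact Hmono | intro; apply Hbd |].
  destruct (nondecreasing_bounded_lim_m_infty F (F 0 - M * PI)) as [lm [Hlm Hlem]];
    [exact Hmono | intro; apply Hbd |].
  assert (HdF : forall x, is_derive F x (h x)).
  { intro x. apply (is_derive_RInt (V := R_CompleteNormedModule)) with 0; auto.
    apply filter_forall. intro. apply (RInt_correct (V := R_CompleteNormedModule)); auto. }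
  assert (HDF : Derive F = h).
  { apply functional_extensionality. intro x. apply is_derive_unique, HdF. }
  exists (lp - lm). split.
  - rewrite <- HDF. apply is_RInt_gen_Derive; auto.
    + apply filter_forall. intros. eexists. apply HdF.
    + apply filter_forall. intros. rewrite HDF. auto.
  - intros A B HAB. rewrite HF. specialize (Hlep B). specialize (Hlem A). lra.
Qed.

Lemma ex_RInt_R_lorentzian_bound (h : R -> R) (M b : R) :
  (forall x, continuous h x) -> (forall x, Rabs (h x) <= M / (1 + (x - b) ^ 2)) ->
  ex_RInt_R h.
Proof.
  intros Hcont Hbound.
  set (w := fun x => M / (1 + (x - b) ^ 2)).
  assert (Hw : forall x, continuous w x).
  { intro x. assert (0 < 1 + (x - b) ^ 2) by (pose proof (pow2_ge_0 (x - b)); lra).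
    apply (ex_derive_continuous (V := R_NormedModule)). unfold w. auto_derive. lra. }
  destruct (is_RInt_R_nonneg w M b Hw) as [lw [Hlw _]].
  { intro x. split; [|apply Rle_refl].
    pose proof (Hbound x). pose proof (Rabs_pos (h x)). unfold w. lra. }
  destruct (is_RInt_R_nonneg (fun x => h x + w x) (2 * M) b) as [l [Hl _]].
  { intro x. apply (continuous_plus h w); auto. }
  { intro x. pose proof (Hbound x) as Hx. apply Rabs_le_between in Hx. unfold w in *.
    set (q := M / (1 + (x - b) ^ 2)) in *.
    replace (2 * M / (1 + (x - b) ^ 2)) with (2 * q) by (unfold q, Rdiv; ring). lra. }
  apply (ex_RInt_gen_ext_eq (fun x => minus (h x + w x) (w x))).
  - intro x. unfold minus, plus, opp; simpl. lra.
  - exists (minus l lw). exact (is_RInt_gen_minus _ _ _ _ Hl Hlw).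
Qed.

Lemma RInt_gen_R_pos (h : R -> R) (M b x0 : R) :
  (forall x, continuous h x) -> (forall x, 0 <= h x <= M / (1 + (x - b) ^ 2)) ->
  0 < h x0 -> 0 < RInt_gen h (Rbar_locally m_infty) (Rbar_locally p_infty).
Proof.
  intros Hcont Hbound Hx0.
  destruct (is_RInt_R_nonneg h M b Hcont Hbound) as [l [Hl Hle]].
  rewrite (is_RInt_gen_unique _ _ Hl).
  pose proof (Hcont x0) as Hc.
  apply filterlim_locally with (eps := mkposreal _ (ltac:(lra) : 0 < h x0 / 2)) in Hc.
  destruct Hc as [[d Hdpos] Hd]. simpl in Hd.
  apply Rlt_le_trans with (RInt h (x0 - d / 2) (x0 + d / 2)).
  - apply RInt_gt_0; [lra| |intros; auto].
    intros x Hx. assert (Hball : Rabs (x - x0) < d) by (apply Rabs_def1; lra).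
    specialize (Hd x Hball). apply Rabs_def2 in Hd. unfold minus, plus, opp in Hd; simpl in Hd. lra.
  - apply Hle. lra.
Qed.

(** * The symplectic form on decaying tangent vectors *)

(* [decaying b phi]: [phi] is continuous and [phi x = O(1 / |x - b|)], which makes
   every product of two decaying functions integrable over the line. *)
Definition decaying (b : R) (phi : R -> R) : Prop :=
  (forall x, continuous phi x) /\ exists M, forall x, (1 + (x - b) ^ 2) * phi x ^ 2 <= M.

Definition decaying_elt (b : R) (Y : Elt) : Prop :=
  decaying b (fun x => fst (Y x)) /\ decaying b (fun x => snd (Y x)).

Lemma decaying_ext (b : R) (phi chi : R -> R) :
  (forall x, phi x = chi x) -> decaying b phi -> decaying b chi.
Proof.
  intros Heq [Hc [M HM]]. split.
  - intro x. apply (continuous_ext phi); auto.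
  - exists M. intro x. rewrite <- Heq. apply HM.
Qed.

Lemma decaying_lincomb (b c1 c2 : R) (phi chi : R -> R) :
  decaying b phi -> decaying b chi -> decaying b (fun x => c1 * phi x + c2 * chi x).
Proof.
  intros [Hc1 [M1 HM1]] [Hc2 [M2 HM2]]. split.
  - intro x. apply (continuous_plus (fun x => c1 * phi x) (fun x => c2 * chi x));
      [apply (continuous_mult (fun _ => c1) phi) | apply (continuous_mult (fun _ => c2) chi)];
      auto using continuous_const.
  - exists (2 * c1 ^ 2 * M1 + 2 * c2 ^ 2 * M2). intro x.
    specialize (HM1 x). specialize (HM2 x).
    assert (Hw : 0 <= 1 + (x - b) ^ 2) by (pose proof (pow2_ge_0 (x - b)); lra).
    apply Rle_trans with ((1 + (x - b) ^ 2) * (2 * c1 ^ 2 * phi x ^ 2 + 2 * c2 ^ 2 * chi x ^ 2)).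
    + apply Rmult_le_compat_l; [exact Hw|]. pose proof (pow2_ge_0 (c1 * phi x - c2 * chi x)). nra.
    + pose proof (pow2_ge_0 c1). pose proof (pow2_ge_0 c2). nra.
Qed.

Lemma decaying_rescaled (F : R -> R) (M g b : R) : 1 <= g ->
  (forall y, continuous F y) -> (forall y, (1 + y ^ 2) ^ 2 * F y ^ 2 <= M) ->
  decaying b (fun x => F (g * (x - b))) /\ decaying b (fun x => (x - b) * F (g * (x - b))).
Proof.
  intros Hg HFc HM.
  assert (Hc : forall x, continuous (fun x => F (g * (x - b))) x).
  { intro x. apply (continuous_comp (fun x => g * (x - b)) F); [|apply HFc].
    apply (ex_derive_continuous (V := R_NormedModule)). auto_derive. exact I. }
  assert (Hweight : forall x, (1 + (x - b) ^ 2) ^ 2 * F (g * (x - b)) ^ 2 <= M).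
  { intro x. eapply Rle_trans; [|apply (HM (g * (x - b)))].
    apply Rmult_le_compat_r; [apply pow2_ge_0|]. apply pow_incr.
    pose proof (pow2_ge_0 (x - b)). split; [lra|].
    replace ((g * (x - b)) ^ 2) with (g ^ 2 * (x - b) ^ 2) by ring.
    assert (1 <= g ^ 2) by nra. nra. }
  split; split.
  - exact Hc.
  - exists M. intro x. eapply Rle_trans; [|apply (Hweight x)].
    apply Rmult_le_compat_r; [apply pow2_ge_0|].
    pose proof (pow2_ge_0 (x - b)). nra.
  - intro x. apply (continuous_mult (fun x => x - b)); [|apply Hc].
    apply (ex_derive_continuous (V := R_NormedModule)). auto_derive. exact I.
  - exists M. intro x. eapply Rle_trans; [|apply (Hweight x)].
    replace ((1 + (x - b) ^ 2) * ((x - b) * F (g * (x - b))) ^ 2)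
      with ((1 + (x - b) ^ 2) * (x - b) ^ 2 * F (g * (x - b)) ^ 2) by ring.
    apply Rmult_le_compat_r; [apply pow2_ge_0|].
    pose proof (pow2_ge_0 (x - b)). nra.
Qed.

Lemma ex_RInt_R_mult_decaying (b : R) (phi chi : R -> R) :
  decaying b phi -> decaying b chi -> ex_RInt_R (fun x => phi x * chi x).
Proof.
  intros [Hc1 [M1 HM1]] [Hc2 [M2 HM2]].
  apply (ex_RInt_R_lorentzian_bound _ ((M1 + M2) / 2) b).
  - intro x. apply (continuous_mult phi chi); auto.
  - intro x. assert (Hw : 1 + (x - b) ^ 2 > 0) by (pose proof (pow2_ge_0 (x - b)); lra).
    apply Rle_div_r; [exact Hw|].
    specialize (HM1 x). specialize (HM2 x).
    rewrite Rabs_mult. rewrite <- (pow2_abs (phi x)) in HM1. rewrite <- (pow2_abs (chi x)) in HM2.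
    pose proof (pow2_ge_0 (Rabs (phi x) - Rabs (chi x))). nra.
Qed.

Lemma L2inner_comm (phi chi : R -> R) : L2inner phi chi = L2inner chi phi.
Proof.
  unfold L2inner. f_equal. apply functional_extensionality. intro x. apply Rmult_comm.
Qed.

Lemma L2inner_lincomb_l (c1 c2 : R) (phi1 phi2 chi : R -> R) :
  ex_RInt_R (fun x => phi1 x * chi x) -> ex_RInt_R (fun x => phi2 x * chi x) ->
  L2inner (fun x => c1 * phi1 x + c2 * phi2 x) chi = c1 * L2inner phi1 chi + c2 * L2inner phi2 chi.
Proof.
  intros [l1 H1] [l2 H2]. unfold L2inner.
  rewrite (is_RInt_gen_unique _ _ H1), (is_RInt_gen_unique _ _ H2).
  apply is_RInt_gen_unique.
  apply (is_RInt_gen_ext (fun x => plus (scal c1 (phi1 x * chi x)) (scal c2 (phi2 x * chi x)))).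
  - apply filter_forall. intros. unfold plus, scal; simpl. unfold mult; simpl. ring.
  - apply (is_RInt_gen_plus _ _ _ _ (is_RInt_gen_scal _ c1 _ H1) (is_RInt_gen_scal _ c2 _ H2)).
Qed.

Lemma L2inner_lincomb (b c1 c2 d1 d2 : R) (phi1 phi2 chi1 chi2 : R -> R) :
  decaying b phi1 -> decaying b phi2 -> decaying b chi1 -> decaying b chi2 ->
  L2inner (fun x => c1 * phi1 x + c2 * phi2 x) (fun x => d1 * chi1 x + d2 * chi2 x) =
  c1 * d1 * L2inner phi1 chi1 + c1 * d2 * L2inner phi1 chi2
  + c2 * d1 * L2inner phi2 chi1 + c2 * d2 * L2inner phi2 chi2.
Proof.
  intros Hp1 Hp2 Hc1 Hc2.
  pose proof (decaying_lincomb b d1 d2 chi1 chi2 Hc1 Hc2) as Hchi.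
  rewrite L2inner_lincomb_l by (apply (ex_RInt_R_mult_decaying b); assumption).
  rewrite (L2inner_comm phi1), (L2inner_comm phi2).
  rewrite !L2inner_lincomb_l by (apply (ex_RInt_R_mult_decaying b); assumption).
  rewrite (L2inner_comm chi1 phi1), (L2inner_comm chi2 phi1),
    (L2inner_comm chi1 phi2), (L2inner_comm chi2 phi2).
  ring.
Qed.

Lemma Omega_lincomb (b e1 e2 f1 f2 : R) (Y1 Y2 : Elt) :
  decaying_elt b Y1 -> decaying_elt b Y2 ->
  Omega (lincomb e1 e2 Y1 Y2) (lincomb f1 f2 Y1 Y2) = (e1 * f2 - e2 * f1) * Omega Y1 Y2.
Proof.
  intros [Hq1 Hp1] [Hq2 Hp2]. unfold Omega, lincomb; cbn [fst snd].
  rewrite !(L2inner_lincomb b) by assumption.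
  rewrite (L2inner_comm (fun x => fst (Y2 x)) (fun x => snd (Y1 x))),
    (L2inner_comm (fun x => snd (Y1 x)) (fun x => fst (Y1 x))),
    (L2inner_comm (fun x => snd (Y2 x)) (fun x => fst (Y1 x))),
    (L2inner_comm (fun x => snd (Y2 x)) (fun x => fst (Y2 x))).
  ring.
Qed.

Lemma Omega_eq_RInt_gen (b : R) (Y1 Y2 : Elt) :
  decaying_elt b Y1 -> decaying_elt b Y2 ->
  Omega Y1 Y2 = RInt_gen (fun x => fst (Y1 x) * snd (Y2 x) - snd (Y1 x) * fst (Y2 x))
    (Rbar_locally m_infty) (Rbar_locally p_infty).
Proof.
  intros [Hq1 Hp1] [Hq2 Hp2].
  destruct (ex_RInt_R_mult_decaying b _ _ Hq1 Hp2) as [l1 H1].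
  destruct (ex_RInt_R_mult_decaying b _ _ Hp1 Hq2) as [l2 H2].
  unfold Omega, L2inner. rewrite (is_RInt_gen_unique _ _ H1), (is_RInt_gen_unique _ _ H2).
  symmetry. apply is_RInt_gen_unique. exact (is_RInt_gen_minus _ _ _ _ H1 H2).
Qed.

Lemma nondegenerate_on_span_of_Omega_neq_0 (b : R) (Y1 Y2 : Elt) :
  decaying_elt b Y1 -> decaying_elt b Y2 -> Omega Y1 Y2 <> 0 ->
  nondegenerate_on_span Y1 Y2.
Proof.
  intros HY1 HY2 HOm c1 c2 Horth x.
  pose proof (Horth 0 1) as H01. pose proof (Horth 1 0) as H10.
  rewrite (Omega_lincomb b) in H01, H10 by assumption.
  assert (c1 = 0) by (apply (Rmult_eq_reg_r (Omega Y1 Y2)); [lra|exact HOm]).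
  assert (c2 = 0) by (apply (Rmult_eq_reg_r (Omega Y1 Y2)); [lra|exact HOm]).
  subst. unfold lincomb. f_equal; ring.
Qed.

(** * Calculus on a half-line *)

Lemma is_lim_p_infty_ball (f : R -> R) (l e : R) : 0 < e -> is_lim f p_infty l ->
  exists X, forall x, X < x -> Rabs (f x - l) < e.
Proof.
  intros He Hl. destruct (proj2 (is_lim_spec f p_infty l) Hl (mkposreal e He)) as [X HX].
  exists X. exact HX.
Qed.

Lemma is_lim_p_infty_continuous_comp (f phi : R -> R) (l : R) :
  is_lim f p_infty l -> continuous phi l -> is_lim (fun x => phi (f x)) p_infty (phi l).
Proof. intros Hf Hphi. exact (filterlim_comp _ _ _ f phi _ _ _ Hf Hphi). Qed.

Lemma derive_nonpos_le (g dg : R -> R) (X : R) :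
  (forall t, X <= t -> is_derive g t (dg t)) -> (forall t, X <= t -> dg t <= 0) ->
  forall x, X <= x -> g x <= g X.
Proof.
  intros Hd Hneg x Hx.
  destruct (MVT_gen g X x dg) as [xi [Hxi Heq]].
  - intros t Ht. apply Hd. rewrite Rmin_left in Ht; lra.
  - intros t Ht. rewrite Rmin_left, Rmax_right in Ht by lra.
    apply continuity_pt_filterlim, (ex_derive_continuous (V := R_NormedModule)).
    eexists. apply Hd. lra.
  - rewrite Rmin_left, Rmax_right in Hxi by lra.
    specialize (Hneg xi (proj1 Hxi)). nra.
Qed.

Lemma le_lim_of_derive_nonneg (w dw : R -> R) (X l : R) :
  (forall t, X <= t -> is_derive w t (dw t)) -> (forall t, X <= t -> 0 <= dw t) ->
  is_lim w p_infty l -> forall x, X <= x -> w x <= l.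
Proof.
  intros Hd Hpos Hl x Hx. apply Rnot_lt_le. intro Hlt.
  destruct (is_lim_p_infty_ball w l (w x - l) ltac:(lra) Hl) as [Y HY].
  set (y := Rmax x Y + 1).
  assert (Hxy : x <= y) by (unfold y; pose proof (Rmax_l x Y); lra).
  assert (Hmono : - w y <= - w x).
  { apply (derive_nonpos_le (fun t => - w t) (fun t => - dw t) x).
    - intros t Ht. apply (is_derive_opp w t (dw t)), Hd. lra.
    - intros t Ht. specialize (Hpos t ltac:(lra)). lra.
    - exact Hxy. }
  specialize (HY y ltac:(unfold y; pose proof (Rmax_r x Y); lra)).
  apply Rabs_def2 in HY. lra.
Qed.

Lemma exp_weighted_le (g dg : R -> R) (X lam : R) :
  (forall t, X <= t -> is_derive g t (dg t)) -> (forall t, X <= t -> dg t <= - lam * g t) ->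
  forall x, X <= x -> g x * exp (lam * x) <= g X * exp (lam * X).
Proof.
  intros Hd Hineq.
  apply (derive_nonpos_le (fun t => g t * exp (lam * t))
    (fun t => (dg t + lam * g t) * exp (lam * t))).
  - intros t Ht. specialize (Hd t Ht). auto_derive; [exists (dg t); exact Hd|].
    change (Derive (fun x => g x) t) with (Derive g t).
    rewrite (is_derive_unique _ _ _ Hd). ring.
  - intros t Ht. specialize (Hineq t Ht). pose proof (exp_pos (lam * t)). nra.
Qed.

Lemma constant_of_derive_0 (E : R -> R) :
  (forall x, is_derive E x 0) -> forall x y, E x = E y.
Proof.
  intros HE.
  assert (Hle : forall x y, x < y -> E x = E y)
    by (intros x y Hxy; apply (eq_is_derive E x y); [intros; apply HE|exact Hxy]).
  intros x y. destruct (Rtotal_order x y) as [H|[->|H]]; [auto|reflexivity|symmetry; auto].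
Qed.

(* If [f] converges while [f'^2 -> L > 0], then over a window of length [T] with
   [L T^2 / 2 >= 4] the mean value theorem moves [f] by at least 2. *)
Lemma lim_derive_sqr_eq_0 (f : R -> R) (l L : R) :
  (forall x, ex_derive f x) -> is_lim f p_infty l ->
  is_lim (fun x => Derive f x ^ 2) p_infty L -> L = 0.
Proof.
  intros Hf Hl HL.
  destruct (Rtotal_order L 0) as [Hneg|[Hzero|Hpos]]; [exfalso| exact Hzero | exfalso].
  - destruct (is_lim_p_infty_ball _ L (- L) ltac:(lra) HL) as [X HX].
    specialize (HX (X + 1) ltac:(lra)). apply Rabs_def2 in HX.
    pose proof (pow2_ge_0 (Derive f (X + 1))). lra.
  - destruct (is_lim_p_infty_ball _ L (L / 2) ltac:(lra) HL) as [X1 HX1].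
    destruct (is_lim_p_infty_ball f l 1 Rlt_0_1 Hl) as [X2 HX2].
    set (x0 := Rmax X1 X2 + 1). set (T := 1 + 8 / L).
    assert (HT : 1 <= T /\ 8 / L <= T)
      by (unfold T; assert (0 < 8 / L) by (apply Rdiv_lt_0_compat; lra); lra).
    assert (Hx0 : X1 < x0 /\ X2 < x0)
      by (unfold x0; pose proof (Rmax_l X1 X2); pose proof (Rmax_r X1 X2); lra).
    destruct (MVT_gen f x0 (x0 + T) (Derive f)) as [xi [Hxi Heq]].
    + intros; apply Derive_correct, Hf.
    + intros; apply continuity_pt_filterlim, (ex_derive_continuous (V := R_NormedModule)), Hf.
    + rewrite Rmin_left, Rmax_right in Hxi by lra.
      replace (x0 + T - x0) with T in Heq by ring.
      assert (Hslope : L / 2 <= Derive f xi ^ 2)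
        by (specialize (HX1 xi ltac:(lra)); apply Rabs_def2 in HX1; lra).
      assert (Hfar : 4 <= (f (x0 + T) - f x0) ^ 2).
      { rewrite Heq. replace ((Derive f xi * T) ^ 2) with (Derive f xi ^ 2 * T ^ 2) by ring.
        apply Rle_trans with (L / 2 * T ^ 2);
          [|apply Rmult_le_compat_r; [apply pow2_ge_0|exact Hslope]].
        replace (L / 2 * T ^ 2) with (T * (L / 2 * T)) by ring.
        assert (4 <= L / 2 * T).
        { apply Rle_trans with (L / 2 * (8 / L)); [right; field; lra|].
          apply Rmult_le_compat_l; lra. }
        nra. }
      pose proof (HX2 x0 ltac:(lra)) as H1. pose proof (HX2 (x0 + T) ltac:(lra)) as H2.
      apply Rabs_def2 in H1. apply Rabs_def2 in H2. nra.
Qed.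

Lemma continuous_nonvanishing_sign (d : R -> R) (X x1 : R) :
  (forall x, continuous d x) -> (forall x, X <= x -> d x <> 0) -> X <= x1 ->
  forall x, x1 <= x -> 0 < d x * d x1.
Proof.
  intros Hc Hnz Hx1 x Hx.
  destruct (Rlt_dec 0 (d x * d x1)) as [|Hn]; [assumption|exfalso].
  destruct (IVT_gen d x1 x 0) as [z [Hz Hdz]].
  - intro t. apply continuity_pt_filterlim, Hc.
  - unfold Rmin, Rmax. destruct (Rle_dec (d x1) (d x)); nra.
  - apply (Hnz z); [|exact Hdz]. rewrite Rmin_left in Hz; lra.
Qed.

Lemma one_plus_le_exp (c t : R) : 0 < c -> 0 <= t -> 1 + t <= (1 + / c) * exp (c * t).
Proof.
  intros Hc Ht. pose proof (exp_ineq1_le (c * t)).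
  assert (0 < / c) by (apply Rinv_0_lt_compat; lra).
  apply Rle_trans with ((1 + / c) * (1 + c * t)); [|apply Rmult_le_compat_l; lra].
  replace ((1 + / c) * (1 + c * t)) with (1 + t + / c + c * t) by (field; lra). nra.
Qed.

Lemma pow_le_exp (n : nat) (c : R) : 0 < c ->
  exists K, forall t, 0 <= t -> (1 + t) ^ n <= K * exp (c * t).
Proof.
  revert c. induction n as [|n IH]; intros c Hc.
  - exists 1. intros t Ht. simpl. rewrite Rmult_1_l.
    pose proof (exp_ineq1_le (c * t)). nra.
  - destruct (IH (c / 2) ltac:(lra)) as [K HK].
    exists ((1 + / (c / 2)) * K). intros t Ht.
    pose proof (one_plus_le_exp (c / 2) t ltac:(lra) Ht).
    specialize (HK t Ht). pose proof (pow_le (1 + t) n ltac:(lra)).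
    replace (c * t) with (c / 2 * t + c / 2 * t) by field. rewrite exp_plus. simpl.
    apply Rle_trans with (((1 + / (c / 2)) * exp (c / 2 * t)) * (K * exp (c / 2 * t)));
      [apply Rmult_le_compat; lra | right; ring].
Qed.

Lemma bounded_of_bounded_tails (phi : R -> R) (X1 X2 M1 M2 : R) :
  (forall x, continuous phi x) ->
  (forall x, X1 <= x -> phi x <= M1) -> (forall x, x <= X2 -> phi x <= M2) ->
  exists M, forall x, phi x <= M.
Proof.
  intros Hc H1 H2.
  destruct (continuity_ab_maj phi (Rmin X1 X2) (Rmax X1 X2)) as [xm [Hxm _]].
  - apply Rle_trans with X1; [apply Rmin_l|apply Rmax_l].
  - intros; apply continuity_pt_filterlim, Hc.
  - exists (Rmax (phi xm) (Rmax M1 M2)). intro x.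
    pose proof (Rmax_l (phi xm) (Rmax M1 M2)). pose proof (Rmax_r (phi xm) (Rmax M1 M2)).
    pose proof (Rmax_l M1 M2). pose proof (Rmax_r M1 M2).
    destruct (Rle_dec X1 x) as [Hx1|Hx1]; [specialize (H1 x Hx1); lra|].
    destruct (Rle_dec x X2) as [Hx2|Hx2]; [specialize (H2 x Hx2); lra|].
    assert (phi x <= phi xm); [|lra].
    apply Hxm. unfold Rmin, Rmax. destruct (Rle_dec X1 X2); lra.
Qed.

(** * Decay of a kink in a nondegenerate well *)

Lemma quadratic_bounds_of_expansion (U : R -> R) (a0 m C delta : R) : 0 < m -> 0 < delta ->
  (forall p, Rabs (p - a0) < delta ->
     Rabs (U p - m ^ 2 / 2 * (p - a0) ^ 2) <= C * Rabs (p - a0) ^ 14) ->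
  exists rho, 0 < rho /\ forall p, Rabs (p - a0) <= rho ->
    m ^ 2 / 4 * (p - a0) ^ 2 <= U p <= 3 * m ^ 2 / 4 * (p - a0) ^ 2.
Proof.
  intros Hm Hdelta HU.
  assert (Hm2 : 0 < m ^ 2) by (apply pow_lt; lra).
  set (r := m ^ 2 / (4 * (Rabs C + 1))).
  assert (Hr : 0 < r) by (unfold r; apply Rdiv_lt_0_compat; pose proof (Rabs_pos C); lra).
  assert (HCr : Rabs C * r <= m ^ 2 / 4).
  { unfold r. apply (Rmult_le_reg_r (4 * (Rabs C + 1))); [pose proof (Rabs_pos C); lra|].
    replace (Rabs C * (m ^ 2 / (4 * (Rabs C + 1))) * (4 * (Rabs C + 1))) with (Rabs C * m ^ 2)
      by (field; pose proof (Rabs_pos C); lra).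
    nra. }
  exists (Rmin (delta / 2) (Rmin 1 r)). split.
  { apply Rmin_pos; [lra|apply Rmin_pos; lra]. }
  intros p Hp.
  pose proof (Rmin_l (delta / 2) (Rmin 1 r)). pose proof (Rmin_r (delta / 2) (Rmin 1 r)).
  pose proof (Rmin_l 1 r). pose proof (Rmin_r 1 r).
  set (t := Rabs (p - a0)) in *.
  assert (Ht : 0 <= t) by apply Rabs_pos.
  assert (Hsq : (p - a0) ^ 2 = t ^ 2) by (unfold t; rewrite pow2_abs; reflexivity).
  specialize (HU p ltac:(unfold t in Hp; lra)). fold t in HU.
  (* The remainder [C t^14] is at most [m^2/4 t^2] because [t^12 <= t <= r]. *)
  assert (Ht12 : t ^ 12 <= r).
  { assert (t ^ 11 <= 1) by (rewrite <- (pow1 11); apply pow_incr; lra).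
    replace (t ^ 12) with (t * t ^ 11) by ring. nra. }
  assert (Hrem : C * t ^ 14 <= m ^ 2 / 4 * t ^ 2).
  { replace (t ^ 14) with (t ^ 12 * t ^ 2) by ring.
    pose proof (pow2_ge_0 t). pose proof (pow_le t 12 Ht). pose proof (Rle_abs C).
    pose proof (Rabs_pos C).
    assert (Rabs C * t ^ 12 <= Rabs C * r) by (apply Rmult_le_compat_l; lra).
    assert (C * (t ^ 12 * t ^ 2) <= Rabs C * (t ^ 12 * t ^ 2))
      by (apply Rmult_le_compat_r; [apply Rmult_le_pos|]; lra).
    nra. }
  rewrite Hsq. apply Rabs_le_between in HU. rewrite Hsq in HU. lra.
Qed.

Lemma derive_le_dist_of_critical (U : R -> R) (a0 r : R) :
  (forall x, ex_derive (Derive U) x) -> (forall x, continuous (Derive (Derive U)) x) ->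
  Derive U a0 = 0 -> 0 <= r ->
  exists K, forall p, Rabs (p - a0) <= r -> Rabs (Derive U p) <= K * Rabs (p - a0).
Proof.
  intros HdU HcU H0 Hr.
  destruct (continuity_ab_maj (fun x => Rabs (Derive (Derive U) x)) (a0 - r) (a0 + r))
    as [xm [Hxm _]]; [lra| |].
  { intros; apply continuity_pt_filterlim, continuous_Rabs_comp, HcU. }
  exists (Rabs (Derive (Derive U) xm)). intros p Hp. apply Rabs_le_between in Hp.
  destruct (MVT_gen (Derive U) a0 p (Derive (Derive U))) as [xi [Hxi Heq]].
  - intros; apply Derive_correct, HdU.
  - intros; apply continuity_pt_filterlim, (ex_derive_continuous (V := R_NormedModule)), HdU.
  - rewrite H0, Rminus_0_r in Heq. rewrite Heq, Rabs_mult.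
    apply Rmult_le_compat_r; [apply Rabs_pos|]. apply Hxm.
    unfold Rmin, Rmax in Hxi. destruct (Rle_dec a0 p); lra.
Qed.

Section Tail.

Variables (U f : R -> R) (a0 k K KU rho : R).
Hypothesis Hf : forall x, ex_derive f x.
Hypothesis Hf'_cont : forall x, continuous (Derive f) x.
Hypothesis Henergy : forall x, Derive f x ^ 2 = 2 * U (f x).
Hypothesis Hlim : is_lim f p_infty a0.
Hypothesis Hk : 0 < k.
Hypothesis Hrho : 0 < rho.
Hypothesis Hquad :
  forall p, Rabs (p - a0) <= rho -> k * (p - a0) ^ 2 <= U p <= K * (p - a0) ^ 2.
Hypothesis HU' : forall p, Rabs (p - a0) <= rho -> Rabs (Derive U p) <= KU * Rabs (p - a0).

Lemma is_derive_sqr_dist (x : R) :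
  is_derive (fun x => (f x - a0) ^ 2) x (2 * (f x - a0) * Derive f x).
Proof. auto_derive; [apply Hf|]. change (Derive (fun x => f x) x) with (Derive f x). ring. Qed.

Lemma derive_sqr_dist_bounds (x : R) : Rabs (f x - a0) <= rho ->
  8 * k * ((f x - a0) ^ 2) ^ 2 <= (2 * (f x - a0) * Derive f x) ^ 2 <=
  8 * K * ((f x - a0) ^ 2) ^ 2.
Proof.
  intro Hx. destruct (Hquad (f x) Hx) as [Hlo Hhi].
  replace ((2 * (f x - a0) * Derive f x) ^ 2) with (4 * (f x - a0) ^ 2 * Derive f x ^ 2)
    by ring.
  rewrite Henergy.
  pose proof (pow2_ge_0 (f x - a0)). split; nra.
Qed.

Lemma tail_stays_at_limit (x0 : R) :
  (forall x, x0 <= x -> Rabs (f x - a0) <= rho) -> f x0 = a0 -> forall x, x0 <= x -> f x = a0.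
Proof.
  intros Hnear Hx0 x Hx.
  set (L := 8 * Rabs K + 1).
  assert (Hgrowth : forall t, x0 <= t ->
    2 * (f t - a0) * Derive f t <= - - L * (f t - a0) ^ 2).
  { intros t Ht. destruct (derive_sqr_dist_bounds t (Hnear t Ht)) as [_ Hhi].
    pose proof (Rle_abs K). pose proof (Rabs_pos K). pose proof (pow2_ge_0 (f t - a0)).
    set (q := (f t - a0) ^ 2) in *. set (dq := 2 * (f t - a0) * Derive f t) in *.
    assert (dq ^ 2 <= (L * q) ^ 2) by (unfold L; nra).
    assert (0 <= L * q) by (unfold L; nra).
    nra. }
  pose proof (exp_weighted_le _ _ x0 (- L) (fun t _ => is_derive_sqr_dist t) Hgrowth x Hx) as Hle.
  cbv beta in Hle. rewrite Hx0, Rminus_diag in Hle.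
  pose proof (exp_pos (- L * x)). pose proof (pow2_ge_0 (f x - a0)).
  assert (Hsq : (f x - a0) ^ 2 = 0) by nra.
  destruct (Req_dec (f x - a0) 0) as [|Hne]; [lra|]. exfalso. exact (pow_nonzero _ 2 Hne Hsq).
Qed.

(* Away from [a0] the energy identity forbids [f' = 0], so [f'] keeps its sign; since [f]
   converges to [a0], it must approach it monotonically. *)
Lemma tail_derive_sign (X : R) :
  (forall x, X <= x -> Rabs (f x - a0) <= rho) -> (forall x, X <= x -> f x <> a0) ->
  forall x, X <= x -> (f x - a0) * Derive f x < 0.
Proof.
  intros Hnear Hne.
  assert (Hnz : forall x, X <= x -> Derive f x <> 0).
  { intros x Hx H0. destruct (Hquad (f x) (Hnear x Hx)) as [Hlo _].
    pose proof (Henergy x) as E. rewrite H0 in E.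
    assert (0 < (f x - a0) ^ 2) by (apply pow2_gt_0; specialize (Hne x Hx); lra). nra. }
  intros x1 Hx1.
  set (w := fun x => (f x - a0) * Derive f x1).
  assert (Hw : w x1 <= (a0 - a0) * Derive f x1).
  { apply (le_lim_of_derive_nonneg w (fun t => Derive f t * Derive f x1) x1).
    - intros t _. unfold w. auto_derive; [apply Hf|].
      change (Derive (fun x => f x) t) with (Derive f t). ring.
    - intros t Ht. left. exact (continuous_nonvanishing_sign _ X x1 Hf'_cont Hnz Hx1 t Ht).
    - apply (is_lim_p_infty_continuous_comp f (fun u => (u - a0) * Derive f x1)); [exact Hlim|].
      apply (ex_derive_continuous (V := R_NormedModule)). auto_derive. exact I.
    - apply Rle_refl. }
  unfold w in Hw. rewrite Rminus_diag, Rmult_0_l in Hw.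
  specialize (Hnz x1 Hx1). specialize (Hne x1 Hx1).
  destruct Hw as [|Hw]; [assumption|].
  apply Rmult_integral in Hw. destruct Hw; [exfalso; apply Hne; lra|contradiction].
Qed.

Lemma tail_exp_decay :
  exists C c X, 0 < c /\ forall x, X <= x -> (f x - a0) ^ 2 <= C * exp (- (c * x)).
Proof.
  destruct (is_lim_p_infty_ball f a0 rho Hrho Hlim) as [X0 HX0].
  set (X := X0 + 1).
  assert (Hnear : forall x, X <= x -> Rabs (f x - a0) <= rho)
    by (intros x Hx; left; apply HX0; unfold X in Hx; lra).
  destruct (classic (exists x0, X <= x0 /\ f x0 = a0)) as [[x0 [Hx0 Hhit]] | Hnohit].
  - exists 0, 1, x0. split; [lra|]. intros x Hx.
    rewrite (tail_stays_at_limit x0) by (intros; auto; apply Hnear; lra).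
    rewrite Rminus_diag, Rmult_0_l. simpl. lra.
  - assert (Hne : forall x, X <= x -> f x <> a0)
      by (intros x Hx E; apply Hnohit; exists x; auto).
    set (c := Rmin 1 (8 * k)).
    assert (Hc : 0 < c /\ c <= 1 /\ c <= 8 * k)
      by (unfold c; repeat split; [apply Rmin_pos; lra|apply Rmin_l|apply Rmin_r]).
    exists ((f X - a0) ^ 2 * exp (c * X)), c, X. split; [lra|]. intros x Hx.
    assert (Hdecr : forall t, X <= t -> 2 * (f t - a0) * Derive f t <= - c * (f t - a0) ^ 2).
    { intros t Ht. destruct (derive_sqr_dist_bounds t (Hnear t Ht)) as [Hlo _].
      pose proof (tail_derive_sign X Hnear Hne t Ht).
      pose proof (pow2_ge_0 (f t - a0)).
      set (q := (f t - a0) ^ 2) in *. set (dq := 2 * (f t - a0) * Derive f t) in *.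
      assert (Hdq : dq < 0) by (unfold dq; lra).
      assert (Hc2 : c ^ 2 <= 8 * k) by nra.
      assert ((c * q) ^ 2 <= dq ^ 2).
      { replace ((c * q) ^ 2) with (c ^ 2 * q ^ 2) by ring.
        apply Rle_trans with (8 * k * q ^ 2); [|exact Hlo].
        apply Rmult_le_compat_r; [apply pow2_ge_0|exact Hc2]. }
      nra. }
    pose proof (exp_weighted_le _ _ X c (fun t _ => is_derive_sqr_dist t) Hdecr x Hx) as Hle.
    cbv beta in Hle.
    replace ((f x - a0) ^ 2) with ((f x - a0) ^ 2 * exp (c * x) * exp (- (c * x)))
      by (rewrite Rmult_assoc, <- exp_plus, Rplus_opp_r, exp_0; ring).
    apply Rmult_le_compat_r; [left; apply exp_pos|exact Hle].
Qed.

Lemma tail_weighted_bound :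
  exists M X, forall x, X <= x ->
    (1 + x ^ 2) ^ 2 * (Derive f x ^ 2 + Derive U (f x) ^ 2) <= M.
Proof.
  destruct tail_exp_decay as [C [c [X1 [Hc Hdecay]]]].
  destruct (pow_le_exp 4 c Hc) as [P HP].
  destruct (is_lim_p_infty_ball f a0 rho Hrho Hlim) as [X2 HX2].
  exists ((2 * K + KU ^ 2) * C * P), (Rmax X1 (Rmax X2 0) + 1). intros x Hx.
  pose proof (Rmax_l X1 (Rmax X2 0)). pose proof (Rmax_r X1 (Rmax X2 0)).
  pose proof (Rmax_l X2 0). pose proof (Rmax_r X2 0).
  assert (Hnear : Rabs (f x - a0) <= rho) by (left; apply HX2; lra).
  assert (Hvals : Derive f x ^ 2 + Derive U (f x) ^ 2 <= (2 * K + KU ^ 2) * (f x - a0) ^ 2).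
  { rewrite Henergy. destruct (Hquad (f x) Hnear) as [_ Hhi]. pose proof (HU' (f x) Hnear) as HD.
    rewrite <- (pow2_abs (Derive U (f x))), <- (pow2_abs (f x - a0)) in *.
    pose proof (Rabs_pos (Derive U (f x))). nra. }
  assert (Hweight : (1 + x ^ 2) ^ 2 <= P * exp (c * x)).
  { apply Rle_trans with ((1 + x) ^ 4); [|apply HP; lra].
    replace ((1 + x) ^ 4) with (((1 + x) ^ 2) ^ 2) by ring.
    apply pow_incr. pose proof (pow2_ge_0 x). nra. }
  specialize (Hdecay x ltac:(lra)).
  assert (HKU : 0 <= 2 * K + KU ^ 2).
  { destruct (Hquad (a0 + rho)) as [Hlo Hhi];
      [replace (a0 + rho - a0) with rho by ring; rewrite Rabs_right; lra|].
    replace (a0 + rho - a0) with rho in * by ring. pose proof (pow2_ge_0 KU).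
    assert (0 < rho ^ 2) by (apply pow_lt; lra). nra. }
  pose proof (pow2_ge_0 (Derive f x)). pose proof (pow2_ge_0 (Derive U (f x))).
  pose proof (pow2_ge_0 (1 + x ^ 2)). pose proof (pow2_ge_0 (f x - a0)).
  pose proof (exp_pos (c * x)).
  assert (Hexp : exp (c * x) * exp (- (c * x)) = 1)
    by (rewrite <- exp_plus, Rplus_opp_r; apply exp_0).
  apply Rle_trans with (P * exp (c * x) * ((2 * K + KU ^ 2) * (C * exp (- (c * x))))).
  - apply Rmult_le_compat; [lra|lra|exact Hweight|].
    apply Rle_trans with ((2 * K + KU ^ 2) * (f x - a0) ^ 2); [exact Hvals|].
    apply Rmult_le_compat_l; assumption.
  - right. transitivity ((2 * K + KU ^ 2) * C * P * (exp (c * x) * exp (- (c * x)))); [ring|].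
    rewrite Hexp. ring.
Qed.

End Tail.

Lemma kink_energy (a : R) (U s : R -> R) :
  (forall x, ex_derive U x) -> (forall x, ex_derive s x) -> (forall x, ex_derive (Derive s) x) ->
  (forall x, Derive (Derive s) x = Derive U (s x)) -> is_lim s p_infty a -> U a = 0 ->
  forall x, Derive s x ^ 2 = 2 * U (s x).
Proof.
  intros HU Hs Hs' Hs'' Hlim HUa.
  set (E := fun x => Derive s x ^ 2 - 2 * U (s x)).
  assert (HE : forall x, E x = E 0).
  { intro y. apply constant_of_derive_0. intro x. unfold E. auto_derive; [repeat split; auto|].
    change (Derive (fun x => s x) x) with (Derive s x).
    change (Derive (fun x => Derive s x) x) with (Derive (Derive s) x).
    change (Derive (fun u => U u)) with (Derive U). rewrite Hs''. ring. }
  assert (Hlim' : is_lim (fun x => Derive s x ^ 2) p_infty (2 * U a + E 0)).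
  { apply (is_lim_ext (fun x => 2 * U (s x) + E 0)).
    - intro x. rewrite <- (HE x). unfold E. ring.
    - apply (is_lim_p_infty_continuous_comp s (fun u => 2 * U u + E 0)); [exact Hlim|].
      apply (ex_derive_continuous (V := R_NormedModule)). auto_derive. apply HU. }
  pose proof (lim_derive_sqr_eq_0 s a _ Hs Hlim Hlim') as H0.
  intro x. pose proof (HE x). unfold E in *. lra.
Qed.

Lemma tail_weighted_bound_at_well (U f : R -> R) (a0 m C delta : R) :
  smooth U -> Derive U a0 = 0 -> 0 < m -> 0 < delta ->
  (forall p, Rabs (p - a0) < delta ->
     Rabs (U p - m ^ 2 / 2 * (p - a0) ^ 2) <= C * Rabs (p - a0) ^ 14) ->
  (forall x, ex_derive f x) -> (forall x, continuous (Derive f) x) ->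
  (forall x, Derive f x ^ 2 = 2 * U (f x)) -> is_lim f p_infty a0 ->
  exists M X, forall x, X <= x ->
    (1 + x ^ 2) ^ 2 * (Derive f x ^ 2 + Derive U (f x) ^ 2) <= M.
Proof.
  intros HU HU'a0 Hm Hdelta Hexp Hf Hf'c Henergy Hlim.
  destruct (quadratic_bounds_of_expansion U a0 m C delta Hm Hdelta Hexp) as [rho [Hrho Hquad]].
  destruct (derive_le_dist_of_critical U a0 rho) as [KU HKU].
  - exact (HU 1%nat).
  - intro x. apply (ex_derive_continuous (V := R_NormedModule)). exact (HU 2%nat x).
  - exact HU'a0.
  - lra.
  - refine (tail_weighted_bound U f a0 (m ^ 2 / 4) (3 * m ^ 2 / 4) KU rho
      Hf Hf'c Henergy Hlim _ Hrho Hquad HKU).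
    assert (0 < m ^ 2) by (apply pow_lt; lra). lra.
Qed.

Lemma tail_weighted_bound_at_well_m_infty (U f : R -> R) (a0 m C delta : R) :
  smooth U -> Derive U a0 = 0 -> 0 < m -> 0 < delta ->
  (forall p, Rabs (p - a0) < delta ->
     Rabs (U p - m ^ 2 / 2 * (p - a0) ^ 2) <= C * Rabs (p - a0) ^ 14) ->
  (forall x, ex_derive f x) -> (forall x, continuous (Derive f) x) ->
  (forall x, Derive f x ^ 2 = 2 * U (f x)) -> is_lim f m_infty a0 ->
  exists M X, forall x, x <= X ->
    (1 + x ^ 2) ^ 2 * (Derive f x ^ 2 + Derive U (f x) ^ 2) <= M.
Proof.
  intros HU HU'a0 Hm Hdelta Hexp Hf Hf'c Henergy Hlim.
  set (fr := fun x => f (- x)).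
  assert (Hfr' : forall x, Derive fr x = - Derive f (- x)).
  { intro x. apply is_derive_unique. unfold fr. auto_derive; [apply Hf|].
    change (Derive (fun x => f x) (- x)) with (Derive f (- x)). ring. }
  destruct (tail_weighted_bound_at_well U fr a0 m C delta HU HU'a0 Hm Hdelta Hexp)
    as [M [X HM]].
  - intro x. unfold fr. auto_derive. apply Hf.
  - intro x. apply (continuous_ext (fun x => - Derive f (- x))); [intro; symmetry; apply Hfr'|].
    apply (continuous_comp (fun x => - x) (fun u => - Derive f u)).
    + apply (ex_derive_continuous (V := R_NormedModule)). auto_derive. exact I.
    + apply (continuous_opp (Derive f)), Hf'c.
  - intro x. rewrite Hfr'. unfold fr. rewrite <- Henergy. ring.
  - unfold fr. apply (is_lim_comp f Ropp p_infty a0 m_infty); [exact Hlim| |].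
    + apply (is_lim_opp (fun y => y) p_infty p_infty), is_lim_id.
    + exists 0. intros. discriminate.
  - exists M, (- X). intros x Hx. specialize (HM (- x) ltac:(lra)).
    rewrite Hfr' in HM. unfold fr in HM. rewrite Ropp_involutive in HM.
    replace ((- x) ^ 2) with (x ^ 2) in HM by ring.
    replace ((- Derive f x) ^ 2) with (Derive f x ^ 2) in HM by ring. exact HM.
Qed.

Lemma kink_weighted_bound (a : R) (U s : R -> R) :
  condition_U1 a U -> is_kink a U s ->
  exists M, forall y, (1 + y ^ 2) ^ 2 * (Derive s y ^ 2 + Derive (Derive s) y ^ 2) <= M.
Proof.
  intros [HU [HUa [_ [HU'a [HU'ma [_ [_ [_ [_ [m [Hm [Hexpp Hexpm]]]]]]]]]]]]
    [Hs [Hs' [Hs'' [Hlimp Hlimm]]]].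
  destruct Hexpp as [Cp [dp [Hdp Hexpp]]]. destruct Hexpm as [Cm [dm [Hdm Hexpm]]].
  assert (Hs''U : forall x, Derive (Derive s) x = Derive U (s x)) by exact Hs''.
  assert (Hs'c : forall x, continuous (Derive s) x)
    by (intro; apply (ex_derive_continuous (V := R_NormedModule)), Hs').
  assert (Hs''c : forall x, continuous (Derive (Derive s)) x).
  { intro x. apply (continuous_ext (fun x => Derive U (s x))); [intro; symmetry; apply Hs''U|].
    apply (continuous_comp s (Derive U)); apply (ex_derive_continuous (V := R_NormedModule)).
    - apply Hs.
    - exact (HU 1%nat (s x)). }
  pose proof (kink_energy a U s (HU 0%nat) Hs Hs' Hs''U Hlimp HUa) as Henergy.
  destruct (tail_weighted_bound_at_well U s a m Cp dp HU HU'a Hm Hdp Hexpp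
    Hs Hs'c Henergy Hlimp) as [Mp [Xp HMp]].
  destruct (tail_weighted_bound_at_well_m_infty U s (- a) m Cm dm HU HU'ma Hm Hdm)
    as [Mm [Xm HMm]]; try assumption.
  { intros p Hp. replace (p - - a) with (p + a) in * by ring. apply Hexpm, Hp. }
  apply (bounded_of_bounded_tails _ Xp Xm Mp Mm).
  - intro x. apply (continuous_mult (fun x => (1 + x ^ 2) ^ 2)).
    + apply (ex_derive_continuous (V := R_NormedModule)). auto_derive. exact I.
    + apply (continuous_plus (fun x => Derive s x ^ 2));
        apply (continuous_comp _ (fun u => u ^ 2)); auto;
        apply (ex_derive_continuous (V := R_NormedModule)); auto_derive; exact I.
  - intros x Hx. rewrite Hs''U. exact (HMp x Hx).
  - intros x Hx. rewrite Hs''U. exact (HMm x Hx).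
Qed.

(** * Tangent vectors to the kink manifold *)

Lemma gamma_ge_1 (v : R) : -1 < v < 1 -> 1 <= gamma v.
Proof.
  intro Hv. unfold gamma. assert (0 < sqrt (1 - v ^ 2)) by (apply sqrt_lt_R0; nra).
  assert (Hle : sqrt (1 - v ^ 2) <= 1)
    by (rewrite <- sqrt_1 at 2; apply sqrt_le_1_alt; pose proof (pow2_ge_0 v); lra).
  apply (Rmult_le_reg_l (sqrt (1 - v ^ 2))); [assumption|]. rewrite Rinv_r; lra.
Qed.

Lemma is_derive_gamma (v : R) : -1 < v < 1 -> is_derive gamma v (v * gamma v ^ 3).
Proof.
  intro Hv. unfold gamma. assert (0 < 1 - v ^ 2) by nra.
  assert (0 < sqrt (1 - v ^ 2)) by (apply sqrt_lt_R0; lra).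
  auto_derive; replace (1 + - (v * (v * 1))) with (1 - v ^ 2) by ring.
  - repeat split; lra.
  - field. lra.
Qed.

Section TangentVectors.

Variables (s : R -> R) (v : R).
Hypothesis Hv : -1 < v < 1.
Hypothesis Hs : forall x, ex_derive s x.
Hypothesis Hs' : forall x, ex_derive (Derive s) x.

Lemma Derive_psi_v (y : R) : Derive (psi_v s v) y = gamma v * Derive s (gamma v * y).
Proof.
  apply is_derive_unique. unfold psi_v. auto_derive; [apply Hs|].
  change (Derive (fun x => s x)) with (Derive s). ring.
Qed.

Lemma pi_v_eq (w y : R) : pi_v s w y = - w * (gamma w * Derive s (gamma w * y)).
Proof.
  unfold pi_v. f_equal. apply is_derive_unique. unfold psi_v. auto_derive; [apply Hs|].
  change (Derive (fun x => s x)) with (Derive s). ring.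
Qed.

Lemma Derive_pi_v (y : R) :
  Derive (pi_v s v) y = - v * gamma v ^ 2 * Derive (Derive s) (gamma v * y).
Proof.
  apply is_derive_unique.
  apply (is_derive_ext (fun y => - v * (gamma v * Derive s (gamma v * y))));
    [intro; symmetry; apply pi_v_eq|].
  auto_derive; [apply Hs'|]. change (Derive (fun x => Derive s x)) with (Derive (Derive s)).
  ring.
Qed.

Lemma Derive_psi_v_velocity (y : R) :
  Derive (fun w => psi_v s w y) v = v * gamma v ^ 3 * y * Derive s (gamma v * y).
Proof.
  apply is_derive_unique. unfold psi_v. pose proof (is_derive_gamma v Hv) as Hg.
  auto_derive; [repeat split; [apply Hs|exists (v * gamma v ^ 3); exact Hg]|].
  change (Derive (fun x => s x)) with (Derive s).
  change (Derive (fun x => gamma x)) with (Derive gamma).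
  rewrite (is_derive_unique _ _ _ Hg). ring.
Qed.

Lemma Derive_pi_v_velocity (y : R) :
  Derive (fun w => pi_v s w y) v =
  - (gamma v + v ^ 2 * gamma v ^ 3) * Derive s (gamma v * y)
  - v ^ 2 * gamma v ^ 4 * y * Derive (Derive s) (gamma v * y).
Proof.
  apply is_derive_unique. pose proof (is_derive_gamma v Hv) as Hg.
  apply (is_derive_ext (fun w => - w * (gamma w * Derive s (gamma w * y))));
    [intro; symmetry; apply pi_v_eq|].
  auto_derive; [repeat split; try (exists (v * gamma v ^ 3); exact Hg); apply Hs'|].
  change (Derive (fun x => Derive s x)) with (Derive (Derive s)).
  change (Derive (fun x => s x)) with (Derive s).
  change (Derive (fun x => gamma x)) with (Derive gamma).
  rewrite (is_derive_unique _ _ _ Hg). ring.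
Qed.

End TangentVectors.

Lemma kink_derive_neq_0 (a : R) (U s : R -> R) :
  a > 0 -> is_kink a U s -> exists y, Derive s y <> 0.
Proof.
  intros Ha [Hs [_ [_ [Hlimp Hlimm]]]].
  apply NNPP. intro Hnone.
  assert (Hconst : forall x, s x = s 0).
  { intro x. apply constant_of_derive_0. intro t.
    assert (H0 : Derive s t = 0) by (apply NNPP; intro Hne; apply Hnone; exists t; exact Hne).
    rewrite <- H0. apply Derive_correct, Hs. }
  assert (Hc : forall x, is_lim s x (s 0)).
  { intro x. apply (is_lim_ext (fun _ => s 0));
      [intro; symmetry; apply Hconst|apply is_lim_const]. }
  assert (Hp : Finite a = Finite (s 0))
    by (rewrite <- (is_lim_unique _ _ _ Hlimp); exact (is_lim_unique _ _ _ (Hc p_infty))).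
  assert (Hm : Finite (- a) = Finite (s 0))
    by (rewrite <- (is_lim_unique _ _ _ Hlimm); exact (is_lim_unique _ _ _ (Hc m_infty))).
  injection Hp. injection Hm. lra.
Qed.

Section Kink.

Variables (a : R) (U s : R -> R) (b v : R).
Hypothesis HU : condition_U1 a U.
Hypothesis Hkink : is_kink a U s.
Hypothesis Hv : -1 < v < 1.

Let g := gamma v.
Let S1 (x : R) := Derive s (g * (x - b)).
Let S2 (x : R) := Derive (Derive s) (g * (x - b)).

Lemma decaying_kink_profiles :
  decaying b S1 /\ decaying b (fun x => (x - b) * S1 x) /\
  decaying b S2 /\ decaying b (fun x => (x - b) * S2 x).
Proof.
  destruct Hkink as [Hs [Hs' [Hs'' _]]].
  destruct (kink_weighted_bound a U s HU Hkink) as [M HM].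
  assert (Hg : 1 <= g) by apply (gamma_ge_1 v Hv).
  assert (Hs''c : forall y, continuous (Derive (Derive s)) y).
  { intro y. apply (continuous_ext (fun y => Derive U (s y))); [intro; symmetry; apply Hs''|].
    destruct HU as [HUsm _].
    apply (continuous_comp s (Derive U)); apply (ex_derive_continuous (V := R_NormedModule));
      [apply Hs|exact (HUsm 1%nat (s y))]. }
  destruct (decaying_rescaled (Derive s) M g b Hg) as [H1 H1'].
  - intro; apply (ex_derive_continuous (V := R_NormedModule)), Hs'.
  - intro y. eapply Rle_trans; [|apply (HM y)]. pose proof (pow2_ge_0 (1 + y ^ 2)).
    pose proof (pow2_ge_0 (Derive (Derive s) y)). nra.
  - destruct (decaying_rescaled (Derive (Derive s)) M g b Hg Hs''c) as [H2 H2'].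
    + intro y. eapply Rle_trans; [|apply (HM y)]. pose proof (pow2_ge_0 (1 + y ^ 2)).
      pose proof (pow2_ge_0 (Derive s y)). nra.
    + exact (conj H1 (conj H1' (conj H2 H2'))).
Qed.

Lemma decaying_tau : decaying_elt b (tau1 s b v) /\ decaying_elt b (tau2 s b v).
Proof.
  destruct Hkink as [Hs [Hs' _]].
  destruct decaying_kink_profiles as [H1 [H1' [H2 H2']]].
  split; split; unfold tau1, tau2; cbn [fst snd].
  - apply (decaying_ext b (fun x => - g * S1 x + 0 * S1 x)); [|now apply decaying_lincomb].
    intro x. rewrite Derive_psi_v by assumption. unfold S1, g. ring.
  - apply (decaying_ext b (fun x => v * g ^ 2 * S2 x + 0 * S2 x)); [|now apply decaying_lincomb].
    intro x. rewrite Derive_pi_v by assumption. unfold S2, g. ring.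
  - apply (decaying_ext b (fun x => v * g ^ 3 * ((x - b) * S1 x) + 0 * S1 x));
      [|now apply decaying_lincomb].
    intro x. rewrite Derive_psi_v_velocity by assumption. unfold S1, g. ring.
  - apply (decaying_ext b
      (fun x => - (g + v ^ 2 * g ^ 3) * S1 x + - (v ^ 2 * g ^ 4) * ((x - b) * S2 x)));
      [|now apply decaying_lincomb].
    intro x. rewrite Derive_pi_v_velocity by assumption. unfold S1, S2, g. ring.
Qed.

Lemma Omega_tau_pos : a > 0 -> 0 < Omega (tau1 s b v) (tau2 s b v).
Proof.
  intro Ha. destruct Hkink as [Hs [Hs' _]].
  destruct decaying_tau as [Ht1 Ht2].
  destruct decaying_kink_profiles as [[HS1c [M HM]] _].
  assert (Hg : 1 <= g) by apply (gamma_ge_1 v Hv).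
  set (c := g ^ 2 * (1 + v ^ 2 * g ^ 2)).
  assert (Hc : 0 < c).
  { unfold c. pose proof (pow2_ge_0 (v * g)). apply Rmult_lt_0_compat; nra. }
  rewrite (Omega_eq_RInt_gen b) by assumption.
  replace (fun x => fst (tau1 s b v x) * snd (tau2 s b v x)
                    - snd (tau1 s b v x) * fst (tau2 s b v x))
    with (fun x => c * S1 x ^ 2).
  2:{ apply functional_extensionality. intro x. unfold tau1, tau2; cbn [fst snd].
      rewrite Derive_psi_v, Derive_pi_v, Derive_psi_v_velocity, Derive_pi_v_velocity
        by assumption.
      unfold c, S1, g. ring. }
  destruct (kink_derive_neq_0 a U s Ha Hkink) as [y0 Hy0].
  apply (RInt_gen_R_pos _ (c * M) b (b + y0 / g)).
  - intro x. apply (continuous_mult (fun _ => c)); [apply continuous_const|].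
    apply (continuous_comp S1 (fun u => u ^ 2)); [apply HS1c|].
    apply (ex_derive_continuous (V := R_NormedModule)). auto_derive. exact I.
  - intro x. split; [pose proof (pow2_ge_0 (S1 x)); nra|].
    assert (Hw : 1 + (x - b) ^ 2 > 0) by (pose proof (pow2_ge_0 (x - b)); lra).
    apply (Rle_div_r _ _ _ Hw). specialize (HM x). nra.
  - unfold S1. replace (g * (b + y0 / g - b)) with y0 by (field; lra).
    apply Rmult_lt_0_compat; [exact Hc|]. apply pow2_gt_0, Hy0.
Qed.

End Kink.

Theorem lemma3p2 (a : R) (U s : R -> R) :
  a > 0 ->
  condition_U1 a U ->
  is_kink a U s ->
  forall b v : R, -1 < v < 1 ->
    nondegenerate_on_span (tau1 s b v) (tau2 s b v).
Proof.
  intros Ha HU Hkink b v Hv.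
  destruct (decaying_tau a U s b v HU Hkink Hv) as [Ht1 Ht2].
  apply (nondegenerate_on_span_of_Omega_neq_0 b); [exact Ht1|exact Ht2|].
  apply Rgt_not_eq, (Omega_tau_pos a U s b v HU Hkink Hv Ha).
Qed.
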